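(* Let $G=(V,E)$ be a surjective-only finite simple graph with incidence matrix $A$, and let $\lambda\in\mathbb{R}_{>0}^n$ be such that the matching problem $(G,\lambda)$ is stabilizable. Let $\Pi_{\ge0}=\{\mu\in\mathbb{R}_{\ge0}^m:A\mu=\lambda\}$. For $\mu\in\Pi_{\ge0}$, let $\underline{E}=\{k\in E:\mu_k>0\}$ and $\underline{G}=(V,\underline{E})$. Then $\mu$ is a vertex of the polytope $\Pi_{\ge0}$ if and only if $\underline{G}$ is injective.
   Context: Incidence matrix: $a_{i,k}=1$ iff node $i$ is an endpoint of edge $e_k$. A graph is injective if the linear map $y\mapsto Ay$ defined by its incidence matrix is injective, equivalently every connected component is a tree or a unicyclic graph whose cycle is odd. Surjective-only: every connected component is non-bipartite and the graph is not injective. A vertex of a convex polytope $\Upsilon$ is a point $y\in\Upsilon$ that cannot be written as a convex combination of points of $\Upsilon\setminus\{y\}$. Stabilizability of $(G,\lambda)$ (existence of a policy making the matching Markov chain positive recurrent) is, for surjective $G$, equivalent to the existence of $\mu\in\mathbb{R}_{>0}^m$ with $A\mu=\lambda$. *)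

From mathcomp Require Import all_boot all_order all_algebra.
From mathcomp Require Import reals.
Set Implicit Arguments. Unset Strict Implicit. Unset Printing Implicit Defensive.
Import Order.TTheory GRing.Theory Num.Theory.
Local Open Scope ring_scope.

Definition simple_graph (n m : nat) (e : 'I_m -> 'I_n * 'I_n) : Prop :=
  (forall k, (e k).1 != (e k).2) /\
  (forall k l, [set (e k).1; (e k).2] = [set (e l).1; (e l).2] -> k = l).

Definition incidence (R : nzRingType) (n m : nat) (e : 'I_m -> 'I_n * 'I_n)
  : 'M[R]_(n, m) :=
  \matrix_(i, k) ((i == (e k).1) || (i == (e k).2))%:R.

(* The subgraph (V, S) with edge set S is injective: the map y |-> A_S y
   on R^S is injective (A_S = columns of A indexed by S); vectors in R^S are
   represented as vectors of R^m supported in S. *)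
Definition injective_on (R : realType) (n m : nat) (e : 'I_m -> 'I_n * 'I_n)
  (S : {set 'I_m}) : Prop :=
  forall y : 'cV[R]_m, (forall k, k \notin S -> y k 0 = 0) ->
    incidence R e *m y = 0 -> y = 0.

Definition graph_injective (R : realType) (n m : nat) (e : 'I_m -> 'I_n * 'I_n)
  : Prop := injective_on R e [set: 'I_m].

Definition graph_surjective (R : realType) (n m : nat) (e : 'I_m -> 'I_n * 'I_n)
  : Prop := forall b : 'cV[R]_n, exists y : 'cV[R]_m, incidence R e *m y = b.

Definition surjective_only (R : realType) (n m : nat) (e : 'I_m -> 'I_n * 'I_n)
  : Prop := graph_surjective R e /\ ~ graph_injective R e.

(* Stabilizability of (G, lambda), for surjective G: exists mu > 0, A mu = lambda. *)
Definition stabilizable (R : realType) (n m : nat) (e : 'I_m -> 'I_n * 'I_n)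
  (lam : 'cV[R]_n) : Prop :=
  exists mu : 'cV[R]_m, (forall k, 0 < mu k 0) /\ incidence R e *m mu = lam.

Definition Pi_ge0 (R : realType) (n m : nat) (e : 'I_m -> 'I_n * 'I_n)
  (lam : 'cV[R]_n) : 'cV[R]_m -> Prop :=
  fun mu => (forall k, 0 <= mu k 0) /\ incidence R e *m mu = lam.

Definition is_vertex (R : realType) (m : nat) (P : 'cV[R]_m -> Prop)
  (y : 'cV[R]_m) : Prop :=
  P y /\ ~ (exists (N : nat) (p : 'I_N -> 'cV[R]_m) (w : 'I_N -> R),
              (forall i, P (p i) /\ p i != y) /\ (forall i, 0 <= w i) /\
              \sum_(i < N) w i = 1 /\ \sum_(i < N) w i *: p i = y).

Definition pos_support (R : realType) (m : nat) (mu : 'cV[R]_m) : {set 'I_m} :=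
  [set k | 0 < mu k 0].

(** If some [y <> 0] supported in the
    support of [mu] has [A y = 0], then [mu +- eps y] stay in the polytope for
    small [eps > 0], and [mu] is their midpoint.  Conversely, in a convex
    combination of points of the polytope equal to [mu], each point with a
    nonzero weight vanishes off the support of [mu]; independence then forces
    it to be [mu] itself. *)

From mathcomp Require Import all_boot all_order all_algebra.
From mathcomp Require Import reals.
Set Implicit Arguments. Unset Strict Implicit. Unset Printing Implicit Defensive.
Import Order.TTheory GRing.Theory Num.Theory.
Local Open Scope ring_scope.

Lemma pos_lower_bound (R : realDomainType) (I : finType) (f : I -> R) :
  exists2 d : R, 0 < d & forall i, 0 < f i -> d <= f i.
Proof.
exists (\big[Num.min/1]_(i | 0 < f i) f i).
  by apply: (big_ind (fun x => 0 < x)) => // x y x0 y0; rewrite lt_min x0.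
by move=> i fi0; rewrite (bigD1 i) //= ge_min lexx.
Qed.

Lemma convex_comb_support (R : numDomainType) (m N : nat)
    (p : 'I_N -> 'cV[R]_m) (w : 'I_N -> R) (x : 'cV[R]_m) :
  (forall i k, 0 <= p i k 0) -> (forall i, 0 <= w i) ->
  \sum_(i < N) w i *: p i = x ->
  forall i k, w i != 0 -> x k 0 = 0 -> p i k 0 = 0.
Proof.
move=> p_ge0 w_ge0 <- i k wi0; rewrite summxE => /psumr_eq0P sum0.
have /eqP := sum0 (fun j _ => ltac:(by rewrite mxE mulr_ge0)) i isT.
by rewrite mxE mulf_eq0 (negbTE wi0) => /eqP.
Qed.

Section NonnegSolutions.

Variables (R : realFieldType) (n m : nat) (A : 'M[R]_(n, m)) (b : 'cV[R]_n).

Definition nonneg_sol (x : 'cV[R]_m) : Prop :=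
  (forall k, 0 <= x k 0) /\ A *m x = b.

Lemma nonneg_sol_segment (mu y : 'cV[R]_m) :
  nonneg_sol mu -> (forall k, ~~ (0 < mu k 0) -> y k 0 = 0) -> A *m y = 0 ->
  exists2 eps : R, 0 < eps &
    forall s, `|s| <= eps -> nonneg_sol (mu + s *: y).
Proof.
move=> [mu_ge0 Amu] ysupp Ay.
(* [x / 0 = 0] makes the ratio vanish exactly where [y] does. *)
have [eps eps0 eps_le] := pos_lower_bound (fun k => mu k 0 / `|y k 0|).
have eps_y k : eps * `|y k 0| <= mu k 0.
  have [mu0 | /ysupp ->] := boolP (0 < mu k 0); last by rewrite normr0 mulr0.
  have [-> | y0] := eqVneq (y k 0) 0; first by rewrite normr0 mulr0 ltW.
  by rewrite -ler_pdivlMr ?normr_gt0 // eps_le // divr_gt0 ?normr_gt0.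
exists eps => // s s_le; split; last by rewrite mulmxDr -scalemxAr Ay scaler0 addr0.
move=> k; rewrite !mxE -lerBlDl sub0r; apply: lerNnormlW.
by rewrite normrM (le_trans _ (eps_y k)) // ler_wpM2r.
Qed.

Lemma nonneg_sol_eq_of_support (mu x : 'cV[R]_m) :
  (forall y : 'cV[R]_m, (forall k, ~~ (0 < mu k 0) -> y k 0 = 0) ->
     A *m y = 0 -> y = 0) ->
  nonneg_sol mu -> nonneg_sol x -> (forall k, mu k 0 = 0 -> x k 0 = 0) ->
  x = mu.
Proof.
move=> free [mu_ge0 Amu] [_ Ax] xsupp; apply/eqP; rewrite -subr_eq0; apply/eqP.
apply: free; last by rewrite mulmxBr Ax Amu subrr.
move=> k mu_npos; have mu0 : mu k 0 = 0 by apply/le_anti; rewrite mu_ge0 leNgt mu_npos.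
by rewrite !mxE mu0 xsupp // subr0.
Qed.

End NonnegSolutions.

Lemma not_vertex_midpoint (R : realType) (m : nat) (P : 'cV[R]_m -> Prop)
    (x z : 'cV[R]_m) :
  z != 0 -> P (x + z) -> P (x - z) -> ~ is_vertex P x.
Proof.
move=> z0 Pxz Pxz' [_ []].
exists 2, (fun i => if i == ord0 then x + z else x - z), (fun _ => 2^-1).
split; [|split; [by move=> i; rewrite invr_ge0 ler0n|split]].
- move=> i; case: (i == ord0); split => //; rewrite -subr_eq0 addrC addKr //.
  by rewrite oppr_eq0.
- by rewrite big_ord_recr big_ord1 /= -div1r -splitr.
- rewrite big_ord_recr big_ord1 /= -scalerDr addrACA subrr addr0.
  by rewrite -mulr2n -scaler_nat scalerA mulVf ?pnatr_eq0 // scale1r.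
Qed.

Lemma is_vertex_of_support (R : realType) (m : nat) (P : 'cV[R]_m -> Prop)
    (x : 'cV[R]_m) :
  (forall p, P p -> forall k, 0 <= p k 0) -> P x ->
  (forall p, P p -> (forall k, x k 0 = 0 -> p k 0 = 0) -> p = x) ->
  is_vertex P x.
Proof.
move=> P_ge0 Px uniq_face; split=> // -[N [p [w [Pp [w_ge0 [w1 wp]]]]]].
have [i wi0] : exists i, w i != 0.
  apply/existsP; apply: contra_eqT w1 => /existsPn w0.
  by rewrite big1 ?(eq_sym 0) ?oner_neq0 // => i _; apply/eqP/negbNE/w0.
apply/(negP (Pp i).2)/eqP/uniq_face; first exact: (Pp i).1.
move=> k; exact: convex_comb_support (fun j => P_ge0 _ (Pp j).1) w_ge0 wp i k wi0.
Qed.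

Theorem proposition5p6 (R : realType) (n m : nat) (e : 'I_m -> 'I_n * 'I_n)
  (lam : 'cV[R]_n) :
  simple_graph e ->
  surjective_only R e ->
  (forall i, 0 < lam i 0) ->
  stabilizable e lam ->
  forall mu : 'cV[R]_m, Pi_ge0 e lam mu ->
    (is_vertex (Pi_ge0 e lam) mu <-> injective_on R e (pos_support mu)).
Proof.
move=> _ _ _ _ mu Pmu.
have supp_mu k : (k \notin pos_support mu) = ~~ (0 < mu k 0) by rewrite inE.
split=> [vertex | free].
- move=> y ysupp Ay; apply/eqP/negPn/negP => y0.
  have [eps eps0 segment] : exists2 eps : R, 0 < eps &
      forall s, `|s| <= eps -> Pi_ge0 e lam (mu + s *: y).
    by apply: nonneg_sol_segment Pmu _ Ay => k; rewrite -supp_mu => /ysupp.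
  apply: (not_vertex_midpoint (z := eps *: y)) vertex.
  - by rewrite scaler_eq0 negb_or y0 andbT gt_eqF.
  - by apply: segment; rewrite gtr0_norm.
  - by rewrite -scaleNr; apply: segment; rewrite normrN gtr0_norm.
apply: is_vertex_of_support => // [p [] // | p Pp psupp].
apply: nonneg_sol_eq_of_support Pmu Pp psupp => y ysupp.
by apply: free => k; rewrite supp_mu => /ysupp.
Qed.
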